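(* Let $\sigma$ be a permutation of $\{1,2,\ldots,n\}$ which is a single cycle $(x_1\ x_2\ \ldots\ x_k)$, $k\ge1$ (fixing all other elements). If $|\sigma(x)-x|\le 2$ for all $x\in\{1,\ldots,n\}$, then either $X=\{x_1,\ldots,x_k\}$ is a set of consecutive integers and $\sigma=\sigma_X$ or $\sigma=\sigma_X^{-1}$, or $k=2$ and $|x_1-x_2|=2$.
   Context: For a set of consecutive integers $X=\{b,b+1,\dots,a\}$, $\sigma_X$ is the permutation (fixing everything outside $X$) defined as follows: if $|X|$ is odd, $\sigma_X$ is the cycle $(b\ b{+}2\ b{+}4\ \cdots\ a{-}2\ a\ a{-}1\ a{-}3\ \cdots\ b{+}1)$; if $|X|$ is even, $\sigma_X=(b\ b{+}2\ b{+}4\ \cdots\ a{-}1\ a\ a{-}2\ a{-}4\ \cdots\ b{+}1)$. In particular $\sigma_X$ is the identity if $|X|=1$ and the transposition $(b\ a)$ if $|X|=2$. *)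

From mathcomp Require Import all_boot all_fingroup.
Set Implicit Arguments. Unset Strict Implicit. Unset Printing Implicit Defensive.

(* The cycle sequence of sigma_X for X = {b, b+1, ..., a}:
   b, b+2, b+4, ... (elements at even offset from b, increasing), followed by
   the elements at odd offset from b in decreasing order.
   For |X| odd this is (b b+2 ... a a-1 a-3 ... b+1);
   for |X| even this is (b b+2 ... a-1 a a-2 ... b+1). *)
Definition sigma_seq (b a : nat) : seq nat :=
  [seq i <- iota b (a - b).+1 | ~~ odd (i - b)]
  ++ rev [seq i <- iota b (a - b).+1 | odd (i - b)].

(* sigma_X as a function on nat: the cyclic permutation along sigma_seq b a,
   fixing everything outside X (path.next maps x to its cyclic successor in
   the sequence, and fixes x if x does not occur in it). *)
Definition sigmaX (b a : nat) (x : nat) : nat := next (sigma_seq b a) x.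

From mathcomp Require Import all_boot all_fingroup zify.
Set Implicit Arguments. Unset Strict Implicit. Unset Printing Implicit Defensive.

(* Read the cycle starting from its least element b.  The two neighbours of b
   in the cycle are distinct and at most 2 above b, so they are b+1 and b+2;
   reversing the cycle (i.e. passing to sigma^-1) if necessary, it reads
   b, b+2, ..., b+1.  Deleting b leaves a cycle b+1, b+2, ... that still moves
   points by at most 2, so by induction it is the cycle of sigma_Y^-1 for
   Y = {b+1, ..., a}.  Since the cycle of sigma_X, X = {b, ..., a}, is b
   followed by the cycle of sigma_Y read backwards, reinserting b gives
   sigma_X.  The induction starts at three elements; among shorter cycles the
   only exception is the transposition (b b+2). *)

Lemma sigma_seq_id b : sigma_seq b b = [:: b].
Proof. by rewrite /sigma_seq subnn /= subnn. Qed.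

Lemma sigma_seq_recr b a : b < a -> sigma_seq b a = b :: rev (sigma_seq b.+1 a).
Proof.
move=> lt_ba; rewrite /sigma_seq.
have -> : (a - b).+1 = (a - b.+1).+2 by lia.
set I := iota b.+1 (a - b.+1).+1.
have parity_shift P : [seq i <- I | P (odd (i - b))] = [seq i <- I | P (~~ odd (i - b.+1))].
  apply: eq_in_filter => i; rewrite mem_iota => /andP[lt_bi _].
  by have -> : i - b = (i - b.+1).+1 by lia.
rewrite -[iota b _]/(b :: I); clearbody I.
rewrite /= subnn /= rev_cat revK.
rewrite (parity_shift negb) (parity_shift id).
by under [X in _ :: X ++ _]eq_filter do rewrite negbK.
Qed.

Lemma sigma_seq_consE b a : b <= a -> sigma_seq b a = b :: behead (sigma_seq b a).
Proof.
rewrite leq_eqVlt => /predU1P[<-|lt_ba]; first by rewrite sigma_seq_id.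
by rewrite sigma_seq_recr.
Qed.

Lemma mem_sigma_seq b a y : b <= a -> (y \in sigma_seq b a) = (b <= y <= a).
Proof.
move=> le_ba; rewrite /sigma_seq mem_cat mem_rev !mem_filter mem_iota.
by case: (odd (y - b)); rewrite /= ?orbF; apply/idP/idP; lia.
Qed.

Lemma sigma_seq_uniq b a : uniq (sigma_seq b a).
Proof.
rewrite /sigma_seq cat_uniq rev_uniq !filter_uniq ?iota_uniq // andbT.
by apply/hasPn => y; rewrite mem_rev !mem_filter => /andP[->].
Qed.

Section ReversedCycle.

Variables (T : eqType) (x : T) (p : seq T).

Let rotr_rev : rotr 1 (rev (x :: p)) = x :: rev p.
Proof. by rewrite rev_cons rotr1_rcons. Qed.

Lemma cycle_cons_rev (e : rel T) : symmetric e -> path.cycle e (x :: rev p) = path.cycle e (x :: p).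
Proof.
by move=> sym_e; rewrite -rotr_rev rotr_cycle rev_cycle; apply: eq_cycle => y z.
Qed.

Lemma next_cons_rev : uniq (x :: p) -> next (x :: rev p) =1 prev (x :: p).
Proof.
by move=> Uxp y; rewrite -rotr_rev next_rotr ?rev_uniq // next_rev.
Qed.

End ReversedCycle.

Definition within2 (x y : nat) := (y <= x + 2) && (x <= y + 2).

Lemma within2C : symmetric within2.
Proof. by move=> x y; rewrite /within2 andbC. Qed.

Lemma within2_cycle_min_ends b c u d :
  b < c -> b < d -> c != d -> path.cycle within2 (b :: c :: rcons u d) ->
  (c = b.+1 /\ d = b.+2) \/ (c = b.+2 /\ d = b.+1).
Proof.
move=> lt_bc lt_bd neq_cd; rewrite /= rcons_path last_rcons.
by case/and3P; rewrite /within2 => ? _ ?; lia.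
Qed.

Lemma rcons_sigma_seq b a : b.+1 < a -> rcons (sigma_seq b.+2 a) b.+1 = rev (sigma_seq b.+1 a).
Proof. by move=> lt_b1a; rewrite (sigma_seq_recr lt_b1a) rev_cons revK. Qed.

Lemma within2_cycle_drop_min b u :
  path.cycle within2 (b :: b.+2 :: rcons u b.+1) -> path.cycle within2 (b.+1 :: b.+2 :: u).
Proof.
by rewrite /= rcons_path => /and3P[_ Pu _]; rewrite Pu /within2 andbT; lia.
Qed.

Lemma within2_cycle_min_tail b t :
  1 < size t -> uniq t -> all (fun y => b < y) t -> path.cycle within2 (b :: t) ->
  t = sigma_seq b.+1 (b + size t) \/ t = rev (sigma_seq b.+1 (b + size t)).
Proof.
move=> gt1_t; have [k size_t] : exists k, size t = k.+2 by exists (size t).-2; lia.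
rewrite size_t; elim: k b t size_t {gt1_t} => [|k IH] b t.
  case: t => [|c [|d []]] // _; rewrite /= inE andbT => neq_cd /and3P[lt_bc lt_bd _] Ct.
  rewrite addn2 sigma_seq_recr // sigma_seq_id.
  have [[-> ->]|[-> ->]] := within2_cycle_min_ends (u := [::]) lt_bc lt_bd neq_cd Ct.
    by left.
  by right.
have tail_b2 u : size u = k.+1 -> uniq (b.+2 :: rcons u b.+1) -> all (fun y => b < y) u ->
    path.cycle within2 (b :: b.+2 :: rcons u b.+1) ->
    b.+2 :: rcons u b.+1 = rev (sigma_seq b.+1 (b + k.+3)).
  move=> size_u; rewrite /= mem_rcons inE rcons_uniq => /andP[/norP[_ b2_u] /andP[b1_u Uu]].
  move=> Au /within2_cycle_drop_min Cu.
  have Au' : all (fun y => b.+1 < y) (b.+2 :: u).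
    rewrite /= ltnSn; apply/allP => y yu; have := allP Au y yu.
    have : y != b.+1 by apply: contraNneq b1_u => <-.
    lia.
  have Uu' : uniq (b.+2 :: u) by rewrite /= b2_u.
  have lt_b2a : b.+2 < b + k.+3 by lia.
  rewrite -(rcons_sigma_seq (ltnW lt_b2a)) -rcons_cons; congr (rcons _ _).
  have := IH b.+1 (b.+2 :: u) (congr1 S size_u) Uu' Au' Cu; rewrite addSnnS => -[//|].
  by rewrite -(rcons_sigma_seq lt_b2a) (sigma_seq_consE lt_b2a) => -[/eqP]; lia.
case: t => [|c t] //; case/lastP: t => [|u d] // /eqP.
rewrite /= size_rcons !eqSS => /eqP size_u Ut.
rewrite /= all_rcons => /and3P[lt_bc lt_bd Au] Ct.
have neq_cd : c != d by move: Ut; rewrite /= mem_rcons inE => /andP[/norP[]].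
have [[Ec Ed]|[Ec Ed]] := within2_cycle_min_ends lt_bc lt_bd neq_cd Ct; subst c d; last first.
  by right; apply: tail_b2.
left; apply: (can_inj revK); rewrite rev_cons rev_rcons.
apply: tail_b2.
- by rewrite size_rev.
- by rewrite -rev_cons -rev_rcons rev_uniq.
- by rewrite all_rev.
- by rewrite -rev_cons -rev_rcons cycle_cons_rev //; exact: within2C.
Qed.

Lemma rot_to_min (s : seq nat) : uniq s -> 0 < size s ->
  exists i b t, rot i s = b :: t /\ all (fun y => b < y) t.
Proof.
move=> Us; case: s Us => // x s' Us _; set s := x :: s' in Us *.
have [b b_s b_min] := ex_minnP (ex_intro (fun y => y \in s) x (mem_head x s')).
have [i t Et] := rot_to b_s; exists i, b, t; split => //.
have : uniq (b :: t) by rewrite -Et rot_uniq.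
case/andP=> b_t _; apply/allP => y y_t.
have : y \in s by rewrite -(mem_rot i) Et inE y_t orbT.
move/b_min; rewrite leq_eqVlt => /predU1P[eq_by|//].
by rewrite eq_by y_t in b_t.
Qed.

Lemma within2_cycle_classification (s : seq nat) :
  uniq s -> 0 < size s -> path.cycle within2 s ->
  (exists b a, b <= a /\ s =i sigma_seq b a /\
     (next s =1 next (sigma_seq b a) \/ next s =1 prev (sigma_seq b a)))
  \/ exists b, perm_eq s [:: b; b.+2].
Proof.
move=> Us size_s Cs; have [i [b [t [Et At]]]] := rot_to_min Us size_s.
have Ut : uniq (b :: t) by rewrite -Et rot_uniq.
have Ct : path.cycle within2 (b :: t) by rewrite -Et rot_cycle.
have mem_s : s =i b :: t by move=> y; rewrite -(mem_rot i) Et.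
have next_s : next s =1 next (b :: t) by move=> y; rewrite -(next_rot i Us) Et.
set a := b + size t; have le_ba : b <= a by rewrite leq_addr.
suff [fw|bw|exc] : [\/ b :: t = sigma_seq b a, b :: rev t = sigma_seq b a | t = [:: b.+2]].
- by left; exists b, a; rewrite -fw; split; [|split; [|left]].
- left; exists b, a; rewrite -bw; split => //.
  split; first by move=> y; rewrite mem_s !inE mem_rev.
  by right => y; rewrite next_s -next_cons_rev ?revK // /= mem_rev rev_uniq.
- by right; exists b; rewrite -exc -Et perm_sym perm_rot.
rewrite /a; case: t => [|c [|d t']] in Et At Ut Ct {mem_s next_s a le_ba} *.
- by apply: Or31; rewrite addn0 sigma_seq_id.
- move: At Ct => /= /andP[lt_bc _] /and3P[Rbc _ _].
  have [->|->] : c = b.+1 \/ c = b.+2 by move: Rbc; rewrite /within2; lia.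
    by apply: Or31; rewrite addn1 sigma_seq_recr // sigma_seq_id.
  exact: Or33.
set t := [:: c, d & t']; have lt_ba : b < b + size t by rewrite -addn1 leq_add2l.
rewrite (sigma_seq_recr lt_ba).
have [E|E] := within2_cycle_min_tail (isT : 1 < size t) (andP Ut).2 At Ct.
  by apply: Or32; rewrite {1}E.
by apply: Or31; rewrite {1}E.
Qed.

Theorem proposition5p2 (n : nat) (sigma : {perm 'I_n}) (xs : seq 'I_n) :
  uniq xs -> 0 < size xs ->
  (forall x : 'I_n, sigma x = next xs x) ->
  (forall x : 'I_n, (sigma x <= x + 2) && (x <= sigma x + 2)) ->
  (exists b a : nat,
      b <= a /\
      (forall y : nat, (y \in [seq val x | x <- xs]) = (b <= y <= a)) /\
      ((forall x : 'I_n, val (sigma x) = sigmaX b a (val x)) \/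
       (forall x : 'I_n, val ((sigma^-1)%g x) = sigmaX b a (val x))))
  \/
  (exists x1 x2 : 'I_n, xs = [:: x1; x2] /\
      (val x1 = val x2 + 2 \/ val x2 = val x1 + 2)).
Proof.
move=> Uxs size_xs sigmaE sigma_near; set s := [seq val x | x <- xs].
have Us : uniq s by rewrite map_inj_uniq //; exact: val_inj.
have val_sigma x : val (sigma x) = next s (val x) by rewrite sigmaE (next_map val_inj).
have Cs : path.cycle within2 s.
  by apply: cycle_from_next => // _ /mapP[x _ ->]; rewrite -val_sigma; exact: sigma_near.
have size_s : 0 < size s by rewrite size_map.
have [[b [a [le_ba [mem_s sigma_cycle]]]]|[b perm_s]] :=
  within2_cycle_classification Us size_s Cs.
  left; exists b, a; split => //; split => [y|]; first by rewrite mem_s mem_sigma_seq.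
  case: sigma_cycle => [fw|bw]; [left|right] => x; first by rewrite val_sigma fw.
  by rewrite -[in RHS](permKV sigma x) val_sigma bw /sigmaX next_prev // sigma_seq_uniq.
right; have : size xs = 2 by rewrite -(size_map val) (perm_size perm_s).
case xsE: xs => [|x1 [|x2 []]] // _; exists x1, x2; split => //.
rewrite /s xsE in perm_s; rewrite xsE /= inE andbT -val_eqE in Uxs.
have := perm_mem perm_s (val x1); have := perm_mem perm_s (val x2).
rewrite !inE !eqxx /= orbT => /esym/orP[]/eqP E2 /esym/orP[]/eqP E1.
all: by move: Uxs E1 E2 => /=; lia.
Qed.
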